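(* Let $(G,H)$ be a simple pair with a general solution $(c^*,D^*,l^*,d^*,f^*,(\gamma^*,x^* ))$ witnessing simplicity. Suppose there exist $i\in F$ and $P\in\mathcal P[i]$ such that $|E(P)\cap\delta_G(C)|\le1$ for every set $C\subseteq V$ that is tight with respect to $c^*,D^*$. Then $(G,H)$ is cut-sufficient (its flow-cut gap equals $1$).
   Context: $G=(V,E)$ (supply) and $H=(V,F)$ (demand) are finite graphs on the same vertex set; $\mathcal P[i]$ is the set of simple paths in $G$ joining the endpoints of $i\in F$; $\delta_G(C)$, $\delta_H(C)$ are the edges with exactly one endpoint in $C$. For $c,D$, $\sigma(C)=\sum_{e\in\delta_G(C)}c_e-\sum_{i\in\delta_H(C)}D_i$; $C$ is tight if $\sigma(C)=0$. $(G,H)$ is cut-sufficient if every choice of $c,D\ge0$ with $\sigma(C)\ge0$ for all $C$ admits a multiflow $f^i_P\ge0$ with $\sum_{(i,P):e\in P}f^i_P\le c_e$ for all $e$ and $\sum_{P\in\mathcal P[i]}f^i_P\ge D_i$ for all $i$. LPs: for fixed $c,D$, (P): minimize $\alpha$ over $\alpha$, $f^i_P\ge0$ with $\sum_{(i,P):e\in P}f^i_P\le\alpha c_e$ and $\sum_{P\in\mathcal P[i]}f^i_P\ge D_i$; its dual (D): maximize $\sum_iD_id_i$ over $l,d\ge0$ with $\sum_ec_el_e=1$, $d_i\le\sum_{e\in P}l_e$ for all $i,P\in\mathcal P[i]$. For fixed $l,d$, (D$'$): maximize $\sum_id_iD_i$ over $c,D\ge0$ with $\sum_el_ec_e=1$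 and $\sum_{i\in\delta_H(C)}D_i\le\sum_{e\in\delta_G(C)}c_e$ for all $C$; its dual (P$'$): minimize $\gamma$ over $\gamma$, $x_C\ge0$ with $\sum_{C:e\in\delta_G(C)}x_C\le\gamma l_e$ and $\sum_{C:i\in\delta_H(C)}x_C\ge d_i$. (+): maximize $\sum_iD_id_i$ over $c,D,l,d\ge0$ with $\sum_ec_el_e=1$, $d_i\le\sum_{e\in P}l_e$ for all $i,P$, and the cut condition; its optimal value is the flow-cut gap of $(G,H)$. A general solution is a tuple $(c^*,D^*,l^*,d^*,f^*,(\gamma^*,x^* ))$ with $(c^*,D^*,l^*,d^* )$ optimal for (+), $f^*$ optimal for (P) with parameters $(c^*,D^* )$ and complementary-slack with $(l^*,d^* )$ for (D), and $(\gamma^*,x^* )$ optimal for (P$'$) with parameters $(l^*,d^* )$ and complementary-slack with $(c^*,D^* )$ for (D$'$). A pair is simple if it has a general solution with $c^*_e>0$, $l^*_e>0$ for all $e$ and $D^*_i>0$ for all $i$. *)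

From HB Require Import structures.
From mathcomp Require Import all_boot all_order all_algebra.
From Stdlib Require Import ClassicalDescription.
Set Implicit Arguments. Unset Strict Implicit. Unset Printing Implicit Defensive.
Import Order.TTheory GRing.Theory Num.Theory.
Local Open Scope ring_scope.

(* A (multi)graph on vertex set V: a finite edge type with an endpoint map.
   G = (V, EG, eG) is the supply graph, H = (V, FH, eH) the demand graph. *)

Section Multiflow.
Variables (R : rcfType) (V EG FH : finType).
Variables (eG : EG -> V * V) (eH : FH -> V * V).

Definition loopless (T : finType) (ends : T -> V * V) : Prop :=
  forall e, (ends e).1 != (ends e).2.

Definition joins (e : EG) (u v : V) : bool :=
  (eG e == (u, v)) || (eG e == (v, u)).

Fixpoint is_walk (x : V) (vs : seq V) (es : seq EG) : bool :=
  match vs, es with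
  | [::], [::] => true
  | y :: vs', e :: es' => joins e x y && is_walk y vs' es'
  | _, _ => false
  end.

(* P : {set EG} is (the edge set of) a simple path in G from s to t.
   A simple path is determined by its edge set and its endpoints, so the
   paths of P[i] are represented by their edge sets. *)
Definition simple_path (s t : V) (P : {set EG}) : Prop :=
  exists (vs : seq V) (es : seq EG),
    [/\ is_walk s vs es, uniq (s :: vs), last s vs = t & P = [set e in es]].

Definition inPi (i : FH) (P : {set EG}) : Prop :=
  simple_path (eH i).1 (eH i).2 P.

Definition inPib (i : FH) (P : {set EG}) : bool :=
  if excluded_middle_informative (inPi i P) then true else false.

Definition deltaG (C : {set V}) : {set EG} :=
  [set e | ((eG e).1 \in C) != ((eG e).2 \in C)].
Definition deltaH (C : {set V}) : {set FH} :=
  [set i | ((eH i).1 \in C) != ((eH i).2 \in C)].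

Definition sigma (c : EG -> R) (D : FH -> R) (C : {set V}) : R :=
  \sum_(e in deltaG C) c e - \sum_(i in deltaH C) D i.

Definition tight (c : EG -> R) (D : FH -> R) (C : {set V}) : Prop :=
  sigma c D C = 0.

Definition cut_condition (c : EG -> R) (D : FH -> R) : Prop :=
  forall C : {set V}, 0 <= sigma c D C.

(* multiflows: f i P = f^i_P, only meaningful for P \in P[i] *)
Definition load (f : FH -> {set EG} -> R) (e : EG) : R :=
  \sum_(i : FH) \sum_(P : {set EG} | inPib i P && (e \in P)) f i P.

Definition flow_value (f : FH -> {set EG} -> R) (i : FH) : R :=
  \sum_(P : {set EG} | inPib i P) f i P.

Definition path_length (l : EG -> R) (P : {set EG}) : R :=
  \sum_(e in P) l e.

Definition cut_sufficient : Prop :=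
  forall (c : EG -> R) (D : FH -> R),
    (forall e, 0 <= c e) -> (forall i, 0 <= D i) -> cut_condition c D ->
    exists f : FH -> {set EG} -> R,
      [/\ forall i P, inPi i P -> 0 <= f i P,
          forall e, load f e <= c e &
          forall i, D i <= flow_value f i].

Definition P_feasible (c : EG -> R) (D : FH -> R)
    (alpha : R) (f : FH -> {set EG} -> R) : Prop :=
  [/\ forall i P, inPi i P -> 0 <= f i P,
      forall e, load f e <= alpha * c e &
      forall i, D i <= flow_value f i].

Definition P_optimal c D alpha f : Prop :=
  P_feasible c D alpha f /\
  forall alpha' f', P_feasible c D alpha' f' -> alpha <= alpha'.

Definition D_feasible (c : EG -> R) (l : EG -> R) (d : FH -> R) : Prop :=
  [/\ forall e, 0 <= l e, forall i, 0 <= d i,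
      \sum_e c e * l e = 1 &
      forall i P, inPi i P -> d i <= path_length l P].

Definition PD_compl_slack (c : EG -> R) (D : FH -> R) alpha f l d : Prop :=
  [/\ forall i P, inPi i P -> 0 < f i P -> d i = path_length l P,
      forall e, 0 < l e -> load f e = alpha * c e &
      forall i, 0 < d i -> flow_value f i = D i].

Definition D'_feasible (l : EG -> R) (c : EG -> R) (D : FH -> R) : Prop :=
  [/\ forall e, 0 <= c e, forall i, 0 <= D i,
      \sum_e l e * c e = 1 &
      forall C : {set V}, \sum_(i in deltaH C) D i <= \sum_(e in deltaG C) c e].

Definition P'_feasible (l : EG -> R) (d : FH -> R)
    (gamma : R) (x : {set V} -> R) : Prop :=
  [/\ forall C, 0 <= x C,
      forall e, \sum_(C : {set V} | e \in deltaG C) x C <= gamma * l e &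
      forall i, d i <= \sum_(C : {set V} | i \in deltaH C) x C].

Definition P'_optimal l d gamma x : Prop :=
  P'_feasible l d gamma x /\
  forall gamma' x', P'_feasible l d gamma' x' -> gamma <= gamma'.

Definition P'D'_compl_slack (l : EG -> R) (d : FH -> R) gamma x c D : Prop :=
  [/\ forall e, 0 < c e -> \sum_(C : {set V} | e \in deltaG C) x C = gamma * l e,
      forall i, 0 < D i -> \sum_(C : {set V} | i \in deltaH C) x C = d i &
      forall C, 0 < x C -> tight c D C].

Definition plus_feasible c D l d : Prop :=
  [/\ forall e, 0 <= c e, forall i, 0 <= D i,
      D_feasible c l d & cut_condition c D].

Definition plus_value (D d : FH -> R) : R := \sum_i D i * d i.

Definition plus_optimal c D l d : Prop :=
  plus_feasible c D l d /\
  forall c' D' l' d', plus_feasible c' D' l' d' ->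
    plus_value D' d' <= plus_value D d.

(* general solution (c_, D_, l_, d_, f_, (gamma_, x_)); alpha_ is the
   optimal value of (P) accompanying f_ *)
Definition general_solution c D l d (f : FH -> {set EG} -> R)
    (gamma : R) (x : {set V} -> R) : Prop :=
  [/\ plus_optimal c D l d,
      exists alpha, P_optimal c D alpha f /\ PD_compl_slack c D alpha f l d,
      P'_optimal l d gamma x &
      P'D'_compl_slack l d gamma x c D].

Definition witnesses_simple c D l d f gamma x : Prop :=
  [/\ general_solution c D l d f gamma x,
      forall e, 0 < c e, forall e, 0 < l e & forall i, 0 < D i].

End Multiflow.

(* Complementary slackness between (P') and (D') gives that the
   optimum of (+) equals gamma: sum_i D_i d_i = sum_C x_C D(delta_H C)
   = sum_C x_C c(delta_G C) = sum_e c_e gamma l_e = gamma, since only tight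
   cuts carry weight.  Along P0, by the same double counting,
   gamma l(P0) = sum_C x_C |P0 cap delta_G C|, and a path crossing a tight
   cut at most once crosses it exactly when the cut separates the ends of
   i0 (parity of crossings); hence gamma l(P0) = d_i0 <= l(P0), so
   gamma <= 1.  Finally a flow-cut gap of at most 1 means cut-sufficiency:
   by Farkas' lemma, data satisfying the cut condition but admitting no
   multiflow yield a violating metric, which after a small shift and a
   rescaling is a feasible solution of (+) of value > 1. *)

From HB Require Import structures.
From mathcomp Require Import all_boot all_order all_algebra ring lra.
From Stdlib Require Import ClassicalDescription.
Set Implicit Arguments. Unset Strict Implicit. Unset Printing Implicit Defensive.
Import Order.TTheory GRing.Theory Num.Theory.
Local Open Scope ring_scope.

Section Sums.
Variable R : realFieldType.

Lemma sum_indicator (K : finType) (P : pred K) (a : R) (g : K -> R) :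
  \sum_k (if P k then a else 0) * g k = a * \sum_(k | P k) g k.
Proof.
rewrite [in RHS]big_mkcond mulr_sumr; apply: eq_bigr => k _.
by case: (P k); rewrite ?mul0r ?mulr0.
Qed.

Lemma sum_indicatorr (K : finType) (P : pred K) (a : R) (g : K -> R) :
  \sum_k g k * (if P k then a else 0) = (\sum_(k | P k) g k) * a.
Proof. by under eq_bigr do rewrite mulrC; rewrite sum_indicator mulrC. Qed.

Lemma sum_deltal (K : finType) (p : K) (a : R) (g : K -> R) :
  \sum_k (if k == p then a else 0) * g k = a * g p.
Proof. by rewrite sum_indicator big_pred1_eq. Qed.

Lemma sum_pairs (I J : finType) (Pi : pred I) (Q : I -> pred J) (F : I * J -> R) :
  \sum_(i | Pi i) \sum_(j | Q i j) F (i, j) = \sum_(v | Pi v.1 && Q v.1 v.2) F v.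
Proof. by rewrite pair_big_dep; apply: eq_bigr => -[]. Qed.

Lemma double_count (I J : finType) (Pi : pred I) (Q : I -> J -> bool)
    (a : I -> R) (x : J -> R) :
  \sum_(i | Pi i) a i * \sum_(j | Q i j) x j = \sum_j x j * \sum_(i | Pi i && Q i j) a i.
Proof.
under eq_bigr do rewrite mulr_sumr.
rewrite (exchange_big_dep xpredT) //; apply: eq_bigr => j _.
by rewrite mulr_sumr; apply: eq_bigr => i _; rewrite mulrC.
Qed.

End Sums.

Section Farkas.
Variable R : realFieldType.

(* Take t = the least of the upper bounds (bb p - r p) / al p, al p > 0. *)
Lemma one_var_feasible_pos (K : finType) (al r bb : K -> R) (p0 : K) :
  0 < al p0 ->
  (forall k, al k = 0 -> r k <= bb k) ->
  (forall p q, 0 < al p -> al q < 0 ->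
     - al q * r p + al p * r q <= - al q * bb p + al p * bb q) ->
  exists t, forall k, r k + al k * t <= bb k.
Proof.
move=> hp0 zero_ok pair_ok.
pose u k := (bb k - r k) / al k.
have [p hp pmin] := @Order.TotalTheory.arg_minP _ R K p0 (fun k => 0 < al k) u hp0.
exists (u p) => k; rewrite /u.
case: (ltrgt0P (al k)) => [hk|hk|hk]; last by rewrite hk mul0r addr0; apply: zero_ok.
- have: al k * u p <= al k * u k by rewrite ler_pM2l // pmin.
  rewrite /u [X in _ <= X]mulrC divfK ?gt_eqF //; lra.
- rewrite -(ler_pM2l hp).
  have -> : al p * (r k + al k * ((bb p - r p) / al p)) =
            al p * r k + al k * (bb p - r p) by field; rewrite gt_eqF.
  have := pair_ok p k hp hk; lra.
Qed.

Lemma one_var_feasible (K : finType) (al r bb : K -> R) :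
  (forall k, al k = 0 -> r k <= bb k) ->
  (forall p q, 0 < al p -> al q < 0 ->
     - al q * r p + al p * r q <= - al q * bb p + al p * bb q) ->
  exists t, forall k, r k + al k * t <= bb k.
Proof.
move=> zero_ok pair_ok.
case: (pickP (fun k => 0 < al k)) => [p0 hp0|no_pos].
  exact: one_var_feasible_pos hp0 zero_ok pair_ok.
case: (pickP (fun k => al k < 0)) => [q0 hq0|no_neg]; last first.
  exists 0 => k; rewrite mulr0 addr0; apply: zero_ok.
  by apply/eqP; rewrite eq_le !leNgt no_pos no_neg.
(* With only nonpositive coefficients, solve for - t instead. *)
have [t ht] : exists t, forall k, r k + - al k * t <= bb k.
  apply: (@one_var_feasible_pos _ _ _ _ q0); first by rewrite oppr_gt0.
    by move=> k /eqP; rewrite oppr_eq0 => /eqP; apply: zero_ok.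
  by move=> p q; rewrite oppr_gt0 oppr_lt0 => hp hq; have := pair_ok q p hq hp; lra.
by exists (- t) => k; rewrite mulrN -mulNr.
Qed.

(* One Fourier-Motzkin elimination step on constraints indexed by K, for the
   variable with coefficients al: the new constraints are indexed by K + K * K,
   namely the old constraints with al k = 0 and, for al p > 0 > al q, the
   combination -al q * (row p) + al p * (row q).  [fm_weight k' k] is the
   (nonnegative) multiplier of old row k in new row k'. *)
Section FourierMotzkinStep.
Variables (K : finType) (al : K -> R).

Definition fm_weight (k' : K + K * K) (k : K) : R :=
  match k' with
  | inl k0 => if al k0 == 0 then (if k == k0 then 1 else 0) else 0
  | inr (p, q) => if (0 < al p) && (al q < 0) then
       (if k == p then - al q else 0) + (if k == q then al p else 0) else 0
  end.

Definition fm_comb (k' : K + K * K) (g : K -> R) : R :=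
  \sum_k fm_weight k' k * g k.

Lemma fm_weight_ge0 k' k : 0 <= fm_weight k' k.
Proof.
case: k' => [k0|[p q]] /=; first by case: (al k0 == 0) => //; case: (k == k0).
case: ifP => // /andP [hp hq].
by apply: addr_ge0; case: ifP => // _; rewrite ?oppr_ge0 ltW.
Qed.

Lemma fm_combE k' g : fm_comb k' g =
  match k' with
  | inl k0 => if al k0 == 0 then g k0 else 0
  | inr (p, q) => if (0 < al p) && (al q < 0) then - al q * g p + al p * g q else 0
  end.
Proof.
rewrite /fm_comb; case: k' => [k0|[p q]] /=; case: ifP => _;
  try by rewrite big1 // => k _; rewrite mul0r.
  by rewrite sum_deltal mul1r.
by under eq_bigr do rewrite mulrDl; rewrite big_split /= !sum_deltal.
Qed.

Lemma fm_comb_eliminates k' : fm_comb k' al = 0.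
Proof.
rewrite fm_combE; case: k' => [k0|[p q]]; case: ifP => //; first by move/eqP.
by rewrite mulNr mulrC addNr.
Qed.

Lemma fm_comb_lin (J : finType) (G : K -> J -> R) (x : J -> R) k' :
  fm_comb k' (fun k => \sum_j G k j * x j) = \sum_j fm_comb k' (G^~ j) * x j.
Proof.
rewrite /fm_comb /=; under [RHS]eq_bigr do rewrite mulr_suml.
under eq_bigr do rewrite mulr_sumr.
by rewrite exchange_big; apply: eq_bigr => j _; apply: eq_bigr => k _; rewrite mulrA.
Qed.

Lemma fm_pullback (y' : K + K * K -> R) (g : K -> R) :
  \sum_k (\sum_k' y' k' * fm_weight k' k) * g k = \sum_k' y' k' * fm_comb k' g.
Proof.
under eq_bigr do rewrite mulr_suml.
rewrite exchange_big; apply: eq_bigr => k' _.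
by rewrite /fm_comb mulr_sumr; apply: eq_bigr => k _; rewrite mulrA.
Qed.

End FourierMotzkinStep.

(* Farkas' lemma (alternative form), for n variables, by induction on n:
   eliminate the first variable, apply the induction hypothesis to the
   Fourier-Motzkin system, and either lift its solution with
   [one_var_feasible] or pull back its certificate with [fm_pullback]. *)
Lemma farkas_ord (n : nat) (K : finType) (A : K -> 'I_n -> R) (b : K -> R) :
  (exists x : 'I_n -> R, forall k, \sum_j A k j * x j <= b k) \/
  (exists y : K -> R, [/\ forall k, 0 <= y k,
      forall j, \sum_k y k * A k j = 0 & \sum_k y k * b k < 0]).
Proof.
elim: n K A b => [|n IH] K A b.
  case: (pickP (fun k => b k < 0)) => [k0 hk0|b_ge0].
    right; exists (fun k => if k == k0 then 1 else 0); split; first by move=> k; case: ifP.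
      by case.
    by rewrite sum_deltal mul1r.
  left; exists (fun _ => 0) => k; rewrite big_ord0.
  by move: (b_ge0 k) => /= /negbT; rewrite -leNgt.
pose al k := A k ord0.
pose A' k' (j : 'I_n) := fm_comb al k' (fun k => A k (lift ord0 j)).
case: (IH _ A' (fun k' => fm_comb al k' b)) => [[x' Hx'] | [y' [y'_ge0 y'A y'b]]].
  pose r k := \sum_j A k (lift ord0 j) * x' j.
  have [t Ht] : exists t, forall k, r k + al k * t <= b k.
    have comb_ok k' : fm_comb al k' r <= fm_comb al k' b by rewrite fm_comb_lin; apply: Hx'.
    apply: one_var_feasible => [k hk|p q hp hq].
      by have := comb_ok (inl k); rewrite !fm_combE hk eqxx.
    by have := comb_ok (inr (p, q)); rewrite !fm_combE hp hq.
  left; exists (fun j => if unlift ord0 j is Some j' then x' j' else t) => k.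
  rewrite big_ord_recl /= unlift_none addrC.
  under eq_bigr do rewrite liftK.
  exact: Ht.
right; exists (fun k => \sum_k' y' k' * fm_weight al k' k); split.
- by move=> k; apply: sumr_ge0 => k' _; rewrite mulr_ge0 ?fm_weight_ge0.
- move=> j; rewrite fm_pullback; case: (unliftP ord0 j) => [j0 ->|->].
    exact: y'A.
  by rewrite big1 // => k' _; rewrite (fm_comb_eliminates al k') mulr0.
- by rewrite fm_pullback.
Qed.

Lemma farkas (J K : finType) (A : K -> J -> R) (b : K -> R) :
  (exists x : J -> R, forall k, \sum_v A k v * x v <= b k) \/
  (exists y : K -> R, [/\ forall k, 0 <= y k,
      forall v, \sum_k y k * A k v = 0 & \sum_k y k * b k < 0]).
Proof.
case: (farkas_ord (fun k (j : 'I_#|J|) => A k (enum_val j)) b) => [[x Hx]|[y [H1 H2 H3]]].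
  left; exists (fun v => x (enum_rank v)) => k.
  rewrite (reindex (fun j : 'I_#|J| => enum_val j)) /=; last exact/onW_bij/enum_val_bij.
  by under eq_bigr do rewrite enum_valK; apply: Hx.
by right; exists y; split => // v; rewrite -(enum_rankK v); apply: H2.
Qed.

End Farkas.

Section Walks.
Variables (V EG : finType) (eG : EG -> V * V).

Lemma walk_edge_ends x vs es e : is_walk eG x vs es -> e \in es ->
  ((eG e).1 \in x :: vs) && ((eG e).2 \in x :: vs).
Proof.
elim: vs x es => [|y vs IH] x [|e' es] //= /andP [hj hw].
rewrite in_cons => /orP [/eqP -> | he].
  by move: hj; rewrite /joins => /orP [] /eqP ->; rewrite /= !inE !eqxx ?orbT.
by have /andP [h1 h2] := IH _ _ hw he; rewrite !(in_cons x) h1 h2 !orbT.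
Qed.

Lemma walk_uniq x vs es : is_walk eG x vs es -> uniq (x :: vs) -> uniq es.
Proof.
elim: vs x es => [|y vs IH] x [|e' es] //= /andP [hj hw] /andP [hx hu].
rewrite (IH _ _ hw hu) andbT; apply/negP => he.
have /andP [h1 h2] := walk_edge_ends hw he.
by move: hj; rewrite /joins => /orP [] /eqP hE; rewrite hE /= in h1 h2;
  [rewrite h1 in hx | rewrite h2 in hx].
Qed.

Lemma walk_crossings_odd (C : {set V}) x vs es : is_walk eG x vs es ->
  odd (count (mem (deltaG eG C)) es) = ((x \in C) != (last x vs \in C)).
Proof.
elim: vs x es => [|y vs IH] x [|e' es] //=; first by rewrite eqxx.
move=> /andP [hj hw]; rewrite oddD oddb (IH _ _ hw).
have -> : (e' \in deltaG eG C) = ((x \in C) != (y \in C)).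
  by rewrite /deltaG inE; move: hj; rewrite /joins => /orP [] /eqP -> /=;
    case: (x \in C); case: (y \in C).
by case: (x \in C); case: (y \in C); case: (last y vs \in C).
Qed.

Lemma simple_path_crossings_odd (C : {set V}) s t P : simple_path eG s t P ->
  odd #|P :&: deltaG eG C| = ((s \in C) != (t \in C)).
Proof.
case=> vs [es [hw hu <- ->]].
have -> : [set e in es] :&: deltaG eG C = [set e in filter (mem (deltaG eG C)) es].
  by apply/setP => e; rewrite !inE mem_filter /= inE andbC.
rewrite cardsE (card_uniqP _) ?filter_uniq ?(walk_uniq hw) // size_filter.
exact: walk_crossings_odd.
Qed.

Lemma simple_path_edge s t P : s != t -> simple_path eG s t P -> exists e, e \in P.
Proof.
move=> st [[|y vs] [es [hw hu hlast ->]]]; first by rewrite -hlast eqxx in st.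
by case: es hw => [|e es] // _; exists e; rewrite inE mem_head.
Qed.

End Walks.

Section CutSufficiency.
Variables (R : rcfType) (V EG FH : finType).
Variables (eG : EG -> V * V) (eH : FH -> V * V).
Hypothesis loopless_H : loopless eH.

Lemma inPibE i P : inPi eG eH i P -> inPib eG eH i P.
Proof. by rewrite /inPib; case: excluded_middle_informative. Qed.

(* Multiflow existence as a linear system in the path variables f^i_P: by
   Farkas' lemma, either a multiflow routes the demands D within the
   capacities c, or there is a "violating metric": lengths l and potentials d
   with d_i at most the l-length of every i-path, yet sum c l < sum D d. *)
Lemma multiflow_or_violating_metric (c : EG -> R) (D : FH -> R) :
  (exists f : FH -> {set EG} -> R,
      [/\ forall i P, inPi eG eH i P -> 0 <= f i P,
          forall e, load eG eH f e <= c e &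
          forall i, D i <= flow_value eG eH f i]) \/
  (exists (l : EG -> R) (d : FH -> R),
      [/\ forall e, 0 <= l e, forall i, 0 <= d i,
          forall i P, inPi eG eH i P -> d i <= path_length l P &
          \sum_e c e * l e < \sum_i D i * d i]).
Proof.
(* Rows: capacity of e, demand of i, nonnegativity of the variable w. *)
pose A (k : (EG + FH) + (FH * {set EG})) (v : FH * {set EG}) : R :=
  match k with
  | inl (inl e) => if inPib eG eH v.1 v.2 && (e \in v.2) then 1 else 0
  | inl (inr i) => if (v.1 == i) && inPib eG eH v.1 v.2 then -1 else 0
  | inr w => if v == w then -1 else 0
  end.
pose b (k : (EG + FH) + (FH * {set EG})) : R :=
  match k with inl (inl e) => c e | inl (inr i) => - D i | inr _ => 0 end.
case: (farkas A b) => [[y Hy] | [y [y_ge0 yA yb]]]; [left | right].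
  exists (fun i P => y (i, P)); split.
  - by move=> i P _; have := Hy (inr (i, P)); rewrite /= sum_indicator big_pred1_eq; lra.
  - move=> e; have := Hy (inl (inl e)); rewrite /= sum_indicator mul1r /load.
    by rewrite (sum_pairs xpredT).
  - move=> i; have := Hy (inl (inr i)); rewrite /= sum_indicator /flow_value.
    rewrite -(sum_pairs (pred1 i) (inPib eG eH)) /= big_pred1_eq; lra.
exists (fun e => y (inl (inl e))), (fun i => y (inl (inr i))); split.
- by move=> e; apply: y_ge0.
- by move=> i; apply: y_ge0.
- move=> i P hP; have := yA (i, P); rewrite !big_sumType /=.
  rewrite inPibE //= !sum_indicatorr mulr1 (big_pred1 i) => [|j]; last by rewrite andbT eq_sym.
  rewrite (big_pred1 (i, P)) => [|w]; last by rewrite eq_sym.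
  by rewrite /path_length; have := y_ge0 (inr (i, P)); lra.
- move: yb; rewrite !big_sumType /= [X in _ + X < 0]big1 => [|w _]; last exact: mulr0.
  have -> : \sum_e y (inl (inl e)) * c e = \sum_e c e * y (inl (inl e)).
    by apply: eq_bigr => e _; rewrite mulrC.
  have -> : \sum_i y (inl (inr i)) * - D i = - \sum_i D i * y (inl (inr i)).
    by rewrite -sumrN; apply: eq_bigr => i _; rewrite mulrN mulrC.
  lra.
Qed.

(* With no capacity at all, the cut condition kills every demand: demand i
   crosses the cut around its first endpoint (demand edges are not loops). *)
Lemma cut_condition_no_capacity (c : EG -> R) (D : FH -> R) :
  (forall i, 0 <= D i) -> cut_condition eG eH c D -> (forall e, c e = 0) ->
  forall i, D i = 0.
Proof.
move=> D_ge0 cut c0 i; apply/eqP; rewrite eq_le D_ge0 andbT.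
have := cut [set (eH i).1]; rewrite /sigma big1 ?sub0r => [|e _]; last exact: c0.
rewrite oppr_ge0; apply: le_trans; rewrite (bigD1 i) /=; last first.
  by rewrite inE !in_set1 eqxx (eq_sym (eH i).2); apply: loopless_H.
by rewrite lerDl sumr_ge0.
Qed.

(* A violating metric for data satisfying the cut condition can be shifted
   by a small constant and rescaled into a feasible solution of (+) whose
   value exceeds 1. *)
Lemma violating_metric_plus (c : EG -> R) (D : FH -> R) (l : EG -> R) (d : FH -> R) :
  (forall e, 0 <= c e) -> (forall i, 0 <= D i) -> cut_condition eG eH c D ->
  (forall e, 0 <= l e) -> (forall i, 0 <= d i) ->
  (forall i P, inPi eG eH i P -> d i <= path_length l P) ->
  \sum_e c e * l e < \sum_i D i * d i ->
  exists (l' : EG -> R) (d' : FH -> R),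
    plus_feasible eG eH c D l' d' /\ 1 < plus_value D d'.
Proof.
move=> c_ge0 D_ge0 cut l_ge0 d_ge0 d_le_len viol.
pose s := \sum_e c e * l e; pose v := \sum_i D i * d i; pose S := \sum_e c e.
have s_ge0 : 0 <= s by apply: sumr_ge0 => e _; apply: mulr_ge0.
have S_gt0 : 0 < S.
  rewrite lt_def sumr_ge0 // andbT; apply/negP => /eqP S0.
  have c0 e : c e = 0 by apply: (psumr_eq0P (P := xpredT)) => // ? _.
  move: viol; rewrite [X in _ < X]big1 => [|i _]; last first.
    by rewrite (cut_condition_no_capacity D_ge0 cut c0) mul0r.
  by rewrite ltNge s_ge0.
(* Shift every length by t = (v - s) / (2 S) and normalize by the new
   capacity-weighted length s + t S = (s + v) / 2. *)
pose t := (v - s) / (2 * S); pose m := s + (v - s) / 2.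
have t_ge0 : 0 <= t by rewrite divr_ge0 ?mulr_ge0 // ?subr_ge0 ltW.
have m_gt0 : 0 < m by have sv : s < v := viol; rewrite /m; lra.
exists (fun e => (l e + t) / m), (fun i => d i / m); split; first split => //; first split.
- by move=> e; apply: divr_ge0; [exact: addr_ge0 | exact: ltW].
- by move=> i; apply: divr_ge0; [exact: d_ge0 | exact: ltW].
- have -> : \sum_e c e * ((l e + t) / m) = (s + t * S) / m.
    rewrite /s /S mulr_sumr -big_split mulr_suml; apply: eq_bigr => e _ /=; ring.
  rewrite /t /m; field; rewrite (gt_eqF S_gt0) andbT; apply: lt0r_neq0.
  by have sv : s < v := viol; lra.
- move=> i P hP; apply: le_trans (_ : path_length l P / m <= _).
    by rewrite ler_pM2r ?invr_gt0 // d_le_len.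
  rewrite /path_length mulr_suml; apply: ler_sum => e _.
  by rewrite ler_pM2r ?invr_gt0 // lerDl.
- have -> : plus_value D (fun i => d i / m) = v / m.
    by rewrite /plus_value /v mulr_suml; apply: eq_bigr => i _; rewrite mulrA.
  rewrite ltr_pdivlMr // mul1r /m.
  by have sv : s < v := viol; lra.
Qed.

Lemma cut_sufficient_of_plus_le1 :
  (forall (c l : EG -> R) (D d : FH -> R),
     plus_feasible eG eH c D l d -> plus_value D d <= 1) ->
  cut_sufficient R eG eH.
Proof.
move=> gap_le1 c D c_ge0 D_ge0 cut.
case: (multiflow_or_violating_metric c D) => // -[l [d [l_ge0 d_ge0 d_le_len viol]]].
have [l' [d' [feas gt1]]] := violating_metric_plus c_ge0 D_ge0 cut l_ge0 d_ge0 d_le_len viol.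
by have := gap_le1 _ _ _ _ feas; rewrite leNgt gt1.
Qed.

Lemma plus_value_eq_gamma (c l : EG -> R) (D d : FH -> R) (gamma : R)
    (x : {set V} -> R) :
  (forall e, 0 < c e) -> (forall i, 0 < D i) -> \sum_e c e * l e = 1 ->
  (forall C, 0 <= x C) -> P'D'_compl_slack eG eH l d gamma x c D ->
  plus_value D d = gamma.
Proof.
move=> c_gt0 D_gt0 cl1 x_ge0 [cs_c cs_D cs_x].
(* Only tight cuts carry weight, and on them demand equals capacity. *)
have tight_sums C : x C * \sum_(i in deltaH eH C) D i = x C * \sum_(e in deltaG eG C) c e.
  have [->|xC_neq0] := eqVneq (x C) 0; first by rewrite !mul0r.
  have xC_gt0 : 0 < x C by rewrite lt_def xC_neq0 x_ge0.
  by have /eqP := cs_x C xC_gt0; rewrite /tight /sigma subr_eq0 => /eqP ->.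
rewrite /plus_value; under eq_bigr => i _ do rewrite -(cs_D i (D_gt0 i)).
transitivity (\sum_e c e * \sum_(C | e \in deltaG eG C) x C).
  rewrite double_count [RHS]double_count; apply: eq_bigr => C _ /=.
  exact: tight_sums.
under eq_bigr => e _ do rewrite cs_c // mulrCA.
by rewrite -mulr_sumr cl1 mulr1.
Qed.

(* The hypothesis of the theorem bounds gamma: if an i0-path P0 crosses every
   tight cut at most once, then it crosses exactly the tight cuts separating
   the ends of i0, so gamma * l(P0) = d(i0) <= l(P0). *)
Lemma gamma_le1 (c l : EG -> R) (D d : FH -> R) (gamma : R) (x : {set V} -> R)
    (i0 : FH) (P0 : {set EG}) :
  (forall e, 0 < c e) -> (forall i, 0 < D i) -> (forall e, 0 < l e) ->
  (forall C, 0 <= x C) ->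
  (forall i P, inPi eG eH i P -> d i <= path_length l P) ->
  P'D'_compl_slack eG eH l d gamma x c D ->
  inPi eG eH i0 P0 ->
  (forall C, tight eG eH c D C -> (#|P0 :&: deltaG eG C| <= 1)%N) ->
  gamma <= 1.
Proof.
move=> c_gt0 D_gt0 l_gt0 x_ge0 d_le_len [cs_c cs_D cs_x] hP0 tight_once.
have len_gt0 : 0 < path_length l P0.
  have [e he] := simple_path_edge (loopless_H i0) hP0.
  rewrite /path_length (bigD1 e) //= ltr_pwDl ?l_gt0 ?sumr_ge0 // => e' _.
  exact: ltW.
have crossings C : x C * #|P0 :&: deltaG eG C|%:R =
                   x C * (if i0 \in deltaH eH C then 1 else 0).
  have [->|xC_neq0] := eqVneq (x C) 0; first by rewrite !mul0r.
  have xC_gt0 : 0 < x C by rewrite lt_def xC_neq0 x_ge0.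
  have := tight_once C (cs_x C xC_gt0); rewrite inE -(simple_path_crossings_odd C hP0).
  by case: #|_| => [|[|n]].
have len_eq : gamma * path_length l P0 = d i0.
  rewrite /path_length mulr_sumr -(cs_D i0 (D_gt0 i0)) -[RHS]mulr1 -sum_indicatorr.
  under eq_bigr => e _ do rewrite -cs_c // -(mul1r (\sum_(C | e \in deltaG eG C) x C)).
  rewrite double_count; apply: eq_bigr => C _; rewrite -crossings sumr_const.
  by congr (_ * _%:R); apply: eq_card => e; rewrite [RHS]inE.
by rewrite -(ger_pMl _ len_gt0) len_eq d_le_len.
Qed.

End CutSufficiency.

Unset Implicit Arguments.

Theorem theorem3p5 (R : rcfType) (V EG FH : finType)
    (eG : EG -> V * V) (eH : FH -> V * V)
    (HlG : loopless eG) (HlH : loopless eH)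
    (c : EG -> R) (D : FH -> R) (l : EG -> R) (d : FH -> R)
    (f : FH -> {set EG} -> R) (gamma : R) (x : {set V} -> R) :
  witnesses_simple eG eH c D l d f gamma x ->
  (exists (i : FH) (P : {set EG}), inPi eG eH i P /\
     forall C : {set V}, tight eG eH c D C -> (#|P :&: deltaG eG C| <= 1)%N) ->
  cut_sufficient R eG eH.
Proof.
move=> [[[[_ _ [_ _ cl1 d_le_len] _] plus_opt] _ [[x_ge0 _ _] _] cs]
        c_gt0 l_gt0 D_gt0] [i0 [P0 [hP0 once]]].
have gamma_small := gamma_le1 HlH c_gt0 D_gt0 l_gt0 x_ge0 d_le_len cs hP0 once.
have value_gamma := plus_value_eq_gamma c_gt0 D_gt0 cl1 x_ge0 cs.
apply: (cut_sufficient_of_plus_le1 HlH) => c' l' D' d' feas.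
by rewrite (le_trans (plus_opt _ _ _ _ feas)) // value_gamma.
Qed.
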